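(* Consider a power allocation game among countries $\mathbf{n}=\{1,\dots,n\}$ on a simple undirected signed graph, with friend sets $\mathcal{F}_i$ (with $i\in\mathcal{F}_i$), adversary sets $\mathcal{A}_i$ ($\mathcal{F}_i\cap\mathcal{A}_i=\emptyset$) and total powers $p_i\ge 0$. Then for every strategy matrix $U=[u_{ij}]\in\mathcal{U}$ there exists a country $i\in\mathbf{n}$ with $x_i(U)\in\{\text{safe},\text{precarious}\}$, i.e. with $\sum_{j\in\mathcal{F}_i}u_{ji}+\sum_{j\in\mathcal{A}_i}u_{ij}\ \ge\ \sum_{j\in\mathcal{A}_i}u_{ji}$. (This holds for every strategy matrix, whether or not it is an equilibrium.)
   Context: Power allocation game (PAG): $n$ countries are the vertices of a simple undirected signed graph; an edge $(i,j)$ labelled $+$ means $i,j$ are friends, labelled $-$ means adversaries. For each $i$, $\mathcal{F}_i$ is the set of friends of $i$, with the convention $i\in\mathcal{F}_i$, and $\mathcal{A}_i$ the set of adversaries; these are disjoint. Country $i$ has total power $p_i\ge 0$. A strategy matrix is a nonnegative $n\times n$ matrix $U=[u_{ij}]$ with $\sum_{j}u_{ij}=p_i$ for each $i$ and $u_{ij}=0$ whenever $j\notin\mathcal{F}_i\cup\mathcal{A}_i$; $\mathcal{U}$ is the set of all strategy matrices. The total support of $i$ is $\sigma_i(U)=\sum_{j\in\mathcal{F}_i}u_{ji}+\sum_{j\in\mathcal{A}_i}u_{ij}$ and the total threat is $\tau_i(U)=\sum_{j\in\mathcal{A}_i}u_{ji}$. The state $x_i(U)$ is safe if $\sigma_i(U)>\tau_i(U)$,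 precarious if $\sigma_i(U)=\tau_i(U)$, unsafe if $\sigma_i(U)<\tau_i(U)$. *)

From mathcomp Require Import all_boot all_order all_algebra.
Set Implicit Arguments. Unset Strict Implicit. Unset Printing Implicit Defensive.
Import Order.TTheory GRing.Theory Num.Theory.
Local Open Scope ring_scope.

Definition signed_graph (n : nat) (F A : rel 'I_n) : Prop :=
  [/\ reflexive F, symmetric F, irreflexive A, symmetric A
    & forall i j, ~~ (F i j && A i j)].

Definition strategy_matrix (R : realFieldType) (n : nat) (F A : rel 'I_n)
    (p : 'I_n -> R) (U : 'M[R]_n) : Prop :=
  [/\ forall i j, 0 <= U i j,
      forall i, \sum_(j < n) U i j = p i
    & forall i j, ~~ F i j -> ~~ A i j -> U i j = 0].

Definition support (R : realFieldType) (n : nat) (F A : rel 'I_n)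
    (U : 'M[R]_n) (i : 'I_n) : R :=
  \sum_(j < n | F i j) U j i + \sum_(j < n | A i j) U i j.

Definition threat (R : realFieldType) (n : nat) (A : rel 'I_n)
    (U : 'M[R]_n) (i : 'I_n) : R :=
  \sum_(j < n | A i j) U j i.

Inductive state := Safe | Precarious | Unsafe.

Definition x_state (R : realFieldType) (n : nat) (F A : rel 'I_n)
    (U : 'M[R]_n) (i : 'I_n) : state :=
  if threat A U i < support F A U i then Safe
  else if support F A U i == threat A U i then Precarious
  else Unsafe.

From Pilot Require Import Defs.
From mathcomp Require Import all_boot all_order all_algebra.
Set Implicit Arguments. Unset Strict Implicit. Unset Printing Implicit Defensive.
Import Order.TTheory GRing.Theory Num.Theory.
Local Open Scope ring_scope.

(* Summed over all countries, the threats equal the adversarial parts of the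
   supports: both count every u_ij with i, j adversaries, once from each end
   of the edge. The friendly parts of the supports are nonnegative, so the
   total support dominates the total threat, and some country must receive
   at least as much support as threat. *)

Lemma exists_le_of_sum_le (R : realDomainType) (I : finType) (i0 : I)
    (f g : I -> R) :
  \sum_i f i <= \sum_i g i -> exists i, f i <= g i.
Proof.
move=> le_fg; apply/existsP; apply: contraLR le_fg.
rewrite negb_exists => /forallP gt_gf; rewrite -ltNge.
apply: ltr_sum => [|i _]; last by rewrite ltNge gt_gf.
by apply/hasP; exists i0; rewrite ?mem_index_enum.
Qed.

Lemma sum_symmetric_rel_tr (R : nmodType) (I : finType) (A : rel I)
    (U : I -> I -> R) :
  symmetric A -> \sum_i \sum_(j | A i j) U j i = \sum_i \sum_(j | A i j) U i j.
Proof.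
move=> Asym; rewrite (exchange_big_dep xpredT) //=.
by apply: eq_bigr => i _; apply: eq_bigl => j; rewrite Asym.
Qed.

(* [Defs.support] is qualified because ssralg's [support] shadows it. *)
Lemma sum_threat_le_sum_support (R : realFieldType) (n : nat) (F A : rel 'I_n)
    (U : 'M[R]_n) :
  symmetric A -> (forall i j, 0 <= U i j) ->
  \sum_i threat A U i <= \sum_i Defs.support F A U i.
Proof.
move=> Asym U_ge0; rewrite /Defs.support /threat big_split /= sum_symmetric_rel_tr //.
by rewrite lerDr; apply: sumr_ge0 => i _; apply: sumr_ge0.
Qed.

Lemma x_state_of_threat_le_support (R : realFieldType) (n : nat) (F A : rel 'I_n)
    (U : 'M[R]_n) (i : 'I_n) :
  threat A U i <= Defs.support F A U i ->
  x_state F A U i = Safe \/ x_state F A U i = Precarious.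
Proof.
rewrite /x_state le_eqVlt => /orP [/eqP ->|->]; last by left.
by right; rewrite ltxx eqxx.
Qed.

Theorem lemma1 (R : realFieldType) (n : nat) (F A : rel 'I_n) (p : 'I_n -> R)
    (U : 'M[R]_n) :
  (0 < n)%N ->
  signed_graph F A ->
  (forall i, 0 <= p i) ->
  strategy_matrix F A p U ->
  exists i : 'I_n, x_state F A U i = Safe \/ x_state F A U i = Precarious.
Proof.
move=> n_gt0 [_ _ _ Asym _] _ [U_ge0 _ _].
have [i threat_le_support] := exists_le_of_sum_le (Ordinal n_gt0)
  (sum_threat_le_sum_support F Asym U_ge0).
by exists i; apply: x_state_of_threat_le_support.
Qed.
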